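(* Under the standing assumptions, $A$ (resp. $A^*$) acts diagonalizably on $V$ with eigenvalues $\theta_0,\dots,\theta_d$ (resp. $\theta^*_0,\dots,\theta^*_d$), and for $0\le i\le d$ the eigenspace of $A$ for $\theta_i$ (resp. of $A^*$ for $\theta^*_i$) has dimension $\binom{d}{i}$.
   Context: Let $\mathbb F$ be an algebraically closed field, $d\ge0$, and $q,a,b,c,a^*,b^*,c^*\in\mathbb F$ with $q,b,c,b^*,c^*$ nonzero and $q^2\ne\pm1$. Put $\theta_i=a+bq^{2i-d}+cq^{d-2i}$ and $\theta^*_i=a^*+b^*q^{2i-d}+c^*q^{d-2i}$ ($0\le i\le d$), and assume $\theta_0,\dots,\theta_d$ are mutually distinct and $\theta^*_0,\dots,\theta^*_d$ are mutually distinct (this forces $q^{2i}\ne1$ for $1\le i\le d$). $U_q(\widehat{\mathfrak{sl}}_2)$ is the associative unital $\mathbb F$-algebra with generators $e_i^{\pm},K_i^{\pm1}$ ($i\in\{0,1\}$) and relations $K_iK_i^{-1}=K_i^{-1}K_i=1$, $K_0K_1=K_1K_0$, $K_ie_i^{\pm}K_i^{-1}=q^{\pm2}e_i^{\pm}$, $K_ie_j^{\pm}K_i^{-1}=q^{\mp2}e_j^{\pm}$ ($i\ne j$), $e_i^+e_i^--e_i^-e_i^+=(K_i-K_i^{-1})/(q-q^{-1})$, $e_0^{\pm}e_1^{\mp}=e_1^{\mp}e_0^{\pm}$, and the $q$-Serre relations $(e_i^\pm)^3e_j^\pm-[3]_q(e_i^\pm)^2e_j^\pm e_i^\pm+[3]_qe_i^\pm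 e_j^\pm(e_i^\pm)^2-e_j^\pm(e_i^\pm)^3=0$ ($i\ne j$), where $[3]_q=q^2+1+q^{-2}$. Tensor products of modules are formed via $e_i^+(v\otimes w)=e_i^+v\otimes K_iw+v\otimes e_i^+w$, $e_i^-(v\otimes w)=e_i^-v\otimes w+K_i^{-1}v\otimes e_i^-w$, $K_i(v\otimes w)=K_iv\otimes K_iw$. For nonzero $\alpha\in\mathbb F$, $V(\alpha)$ is the module with basis $x,y$ and $K_1x=qx$, $K_1y=q^{-1}y$, $e_1^-x=y$, $e_1^-y=0$, $e_1^+x=0$, $e_1^+y=x$, $K_0x=q^{-1}x$, $K_0y=qy$, $e_0^-x=0$, $e_0^-y=q\alpha^{-1}x$, $e_0^+x=q^{-1}\alpha y$, $e_0^+y=0$. $V=V(\alpha_1)\otimes\cdots\otimes V(\alpha_d)$ with nonzero $\alpha_i\in\mathbb F$ (for $d=0$, the trivial module where each $e_i^\pm$ acts as $0$ and each $K_i^{\pm1}$ as $1$). Fix $u,v,u^*,v^*\in\mathbb F$ with $uv^*=-bb^*q^{-1}(q-q^{-1})^2$, $vu^*=-cc^*q^{-1}(q-q^{-1})^2$; set $R=ue_0^++ve_1^-K_1$, $L=u^*e_1^++v^*e_0^-K_0$, $A=a1+bK_0+cK_1+R$, $A^*=a^*1+b^*K_0+c^*K_1+L$. *)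

From HB Require Import structures.
From mathcomp Require Import all_boot all_order all_algebra.
Set Implicit Arguments. Unset Strict Implicit. Unset Printing Implicit Defensive.
Import Order.TTheory GRing.Theory Num.Theory.
Local Open Scope ring_scope.

(* CONVENTION: linear operators on F^n are n x n matrices acting on ROW
   vectors (MathComp's convention): the operator with matrix M sends v to
   v *m M.  Hence the entry M i j is the coefficient of basis vector j in the
   image of basis vector i, and the product X Y of operators (first Y, then X)
   has matrix  M(Y) *m M(X).  This is the convention of MathComp's
   [eigenspace], [eigenvalue] and [diagonalizable]. *)

Section Defs.
Variable F : fieldType.

(* Kronecker (tensor) product of matrices; the basis of F^m (x) F^n is
   indexed by pairs, enumerated through 'I_(m*n). *)
Definition tidx m n (k : 'I_(m * n)) : 'I_m * 'I_n :=
  enum_val (cast_ord (esym (mxvec_cast m n)) k).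

Definition tensmx m n (A : 'M[F]_m) (B : 'M[F]_n) : 'M[F]_(m * n) :=
  \matrix_(k, l) (A (tidx k).1 (tidx l).1 * B (tidx k).2 (tidx l).2).

(* The action of the generators e_0^+, e_0^-, e_1^+, e_1^-, K_0, K_1,
   K_0^{-1}, K_1^{-1} of U_q(sl2^) on an n-dimensional module. *)
Record uqrep (n : nat) := UqRep {
  E0p : 'M[F]_n; E0m : 'M[F]_n; E1p : 'M[F]_n; E1m : 'M[F]_n;
  K0 : 'M[F]_n; K1 : 'M[F]_n; K0i : 'M[F]_n; K1i : 'M[F]_n }.

(* Tensor product via the coproduct
   e^+ (v(x)w) = e^+ v (x) K w + v (x) e^+ w,
   e^- (v(x)w) = e^- v (x) w + K^{-1} v (x) e^- w,
   K^{+-1} (v(x)w) = K^{+-1} v (x) K^{+-1} w. *)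
Definition tensrep m n (X : uqrep m) (Y : uqrep n) : uqrep (m * n) :=
  UqRep (tensmx (E0p X) (K0 Y) + tensmx 1 (E0p Y))
        (tensmx (E0m X) 1 + tensmx (K0i X) (E0m Y))
        (tensmx (E1p X) (K1 Y) + tensmx 1 (E1p Y))
        (tensmx (E1m X) 1 + tensmx (K1i X) (E1m Y))
        (tensmx (K0 X) (K0 Y)) (tensmx (K1 X) (K1 Y))
        (tensmx (K0i X) (K0i Y)) (tensmx (K1i X) (K1i Y)).

Definition castrep m n (e : m = n) (X : uqrep m) : uqrep n :=
  UqRep (castmx (e, e) (E0p X)) (castmx (e, e) (E0m X))
        (castmx (e, e) (E1p X)) (castmx (e, e) (E1m X))
        (castmx (e, e) (K0 X)) (castmx (e, e) (K1 X))
        (castmx (e, e) (K0i X)) (castmx (e, e) (K1i X)).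

Definition trivrep : uqrep 1 := UqRep 0 0 0 0 1 1 1 1.

(* The evaluation module V(alpha), basis x (index 0), y (index 1). *)
Definition Vrep (q alpha : F) : uqrep 2 :=
  UqRep
    (* e_0^+ x = q^{-1} alpha y, e_0^+ y = 0 *)
    (\matrix_(i, j) (if (i == 0 :> nat) && (j == 1 :> nat) then q^-1 * alpha else 0))
    (* e_0^- x = 0, e_0^- y = q alpha^{-1} x *)
    (\matrix_(i, j) (if (i == 1 :> nat) && (j == 0 :> nat) then q * alpha^-1 else 0))
    (* e_1^+ x = 0, e_1^+ y = x *)
    (\matrix_(i, j) (if (i == 1 :> nat) && (j == 0 :> nat) then 1 else 0))
    (* e_1^- x = y, e_1^- y = 0 *)
    (\matrix_(i, j) (if (i == 0 :> nat) && (j == 1 :> nat) then 1 else 0))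
    (* K_0 x = q^{-1} x, K_0 y = q y *)
    (\matrix_(i, j) (if i == j then (if i == 0 :> nat then q^-1 else q) else 0))
    (* K_1 x = q x, K_1 y = q^{-1} y *)
    (\matrix_(i, j) (if i == j then (if i == 0 :> nat then q else q^-1) else 0))
    (\matrix_(i, j) (if i == j then (if i == 0 :> nat then q else q^-1) else 0))
    (\matrix_(i, j) (if i == j then (if i == 0 :> nat then q^-1 else q) else 0)).

Fixpoint Vtens (q : F) (s : seq F) : uqrep (2 ^ size s) :=
  match s return uqrep (2 ^ size s) with
  | [::] => trivrep
  | a :: s' => castrep (esym (expnS 2 (size s'))) (tensrep (Vrep q a) (Vtens q s'))
  end.

Definition Aop (q a b c u v : F) (s : seq F) : 'M[F]_(2 ^ size s) :=
  let X := Vtens q s in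
  a%:M + b *: K0 X + c *: K1 X + u *: E0p X + v *: (K1 X *m E1m X).

Definition Asop (q as_ bs cs us vs : F) (s : seq F) : 'M[F]_(2 ^ size s) :=
  let X := Vtens q s in
  as_%:M + bs *: K0 X + cs *: K1 X + us *: E1p X + vs *: (K0 X *m E0m X).

Definition thetaseq (q a b c : F) (d i : nat) : F :=
  a + b * q ^ ((2 * i)%:Z - d%:Z) + c * q ^ (d%:Z - (2 * i)%:Z).

End Defs.

From HB Require Import structures.
From mathcomp Require Import all_boot all_order all_algebra zify.
Import Order.TTheory GRing.Theory Num.Theory.
Local Open Scope ring_scope.
Set Implicit Arguments. Unset Strict Implicit. Unset Printing Implicit Defensive.

(* Give each vector of the standard tensor basis of
   V = V(alpha_1) (x) ... (x) V(alpha_d) the weight "number of y factors".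
   K_0 and K_1 are diagonal in this basis, acting on a vector of weight i by
   q^(2i-d) and q^(d-2i); e_0^+ and e_1^- raise the weight by one, e_1^+ and
   e_0^- lower it by one.  Hence A is triangular with respect to the weight:
   its diagonal entry at a vector of weight i is theta_i and its other nonzero
   entries strictly raise the weight; A^* is triangular in the opposite
   direction with diagonal entries theta^*_i.  There are binom(d, i) basis
   vectors of weight i.  Only q <> 0, the
   distinctness of the theta_i (resp. theta^*_i) and d = length of alpha are
   used. *)

Definition binomial_spectrum (F : fieldType) n (M : 'M[F]_n) (th : nat -> F) (d : nat) :=
  diagonalizable M
  /\ (forall z, eigenvalue M z <-> exists2 i, (i <= d)%N & z = th i)
  /\ (forall i, (i <= d)%N -> \rank (eigenspace M (th i)) = 'C(d, i)).

Lemma mxrank_ker_mul_le (F : fieldType) n (X Y : 'M[F]_n) :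
  (\rank (kermx (X *m Y)) <= \rank (kermx X) + \rank (kermx Y))%N.
Proof.
rewrite !mxrank_ker.
by have := mxrank_mul_min X Y; have := rank_leq_col X; have := rank_leq_col Y; lia.
Qed.

Section WeightTriangular.
Variables (F : fieldType) (n d : nat) (M : 'M[F]_n) (w : 'I_n -> nat) (th : nat -> F).
Hypotheses (w_bound : forall k, (w k <= d)%N)
  (th_inj : forall i j, (i <= d)%N -> (j <= d)%N -> th i = th j -> i = j)
  (M_diag : forall k, M k k = th (w k))
  (M_upper : forall k l, k != l -> M k l != 0 -> (w k < w l)%N).

Local Notation weight_count i := #|[pred k | w k == i]|.

(* Every eigenvalue is a [th (w k)], read off at a lowest-weight coordinate
   [k] of the eigenvector, where [M] acts by its diagonal entry only. *)
Lemma eigenvector_weight (z : F) (v : 'rV[F]_n) : v != 0 -> v *m M = z *: v ->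
  exists2 k, v 0 k != 0 & z = th (w k).
Proof.
move=> vn0 ev; have [k0 vk0] : exists k, v 0 k != 0.
  apply/existsP; apply: contraR vn0 => /existsPn v0.
  by apply/eqP/matrixP => i k; rewrite ord1 mxE; apply/eqP; rewrite -[_ == _]negbK v0.
have [k vk kmin] := @arg_minnP _ k0 (fun k => v 0 k != 0) w vk0; exists k => //.
have /matrixP/(_ 0 k) := ev; rewrite !mxE (bigD1 k) //= big1 ?addr0.
  by rewrite M_diag mulrC => /(mulIf vk).
move=> l nlk; have [->|/(M_upper nlk) lt_lk] := eqVneq (M l k) 0; first by rewrite mulr0.
have [->|/kmin] := eqVneq (v 0 l) 0; first by rewrite mul0r.
by rewrite leqNgt lt_lk.
Qed.

Fixpoint weight_annihilator (j : nat) : 'M[F]_n :=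
  if j is j'.+1 then weight_annihilator j' *m (M - (th j')%:M) else 1%:M.

Lemma weight_annihilator_vanish j i k : (w k < j)%N -> weight_annihilator j i k = 0.
Proof.
elim: j i k => [//|j IH] i k /= lt_kj; rewrite mxE (bigD1 k) //= big1 ?addr0.
  rewrite !mxE eqxx mulr1n M_diag.
  move: lt_kj; rewrite ltnS leq_eqVlt => /orP[/eqP->|/IH->]; first by rewrite subrr mulr0.
  by rewrite mul0r.
move=> l nlk; rewrite !mxE (negbTE nlk) mulr0n subr0.
have [->|/(M_upper nlk) lt_lk] := eqVneq (M l k) 0; first by rewrite mulr0.
by rewrite IH ?mul0r // (leq_trans lt_lk).
Qed.

(* Since the product of the M - th t vanishes, subadditivity of nullity shows
   that the eigenspaces have total dimension at least n. *)
Lemma sum_eigenspace_ge : (n <= \sum_(t < d.+1) \rank (eigenspace M (th t)))%N.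
Proof.
have vanish : weight_annihilator d.+1 = 0.
  by apply/matrixP => i k; rewrite weight_annihilator_vanish ?mxE // ltnS.
suff : (\rank (kermx (weight_annihilator d.+1))
        <= \sum_(t < d.+1) \rank (eigenspace M (th t)))%N.
  by rewrite vanish mxrank_ker mxrank0 subn0.
elim: d.+1 => [|j IH] /=; first by rewrite mxrank_ker mxrank1 subnn.
by rewrite big_ord_recr /=; apply: leq_trans (mxrank_ker_mul_le _ _) _; rewrite leq_add2r.
Qed.

(* An eigenvector for th i has a nonzero weight-i coordinate, so the
   th i-eigenspace meets trivially the kernel of the projection onto the
   weight-i coordinates. *)
Lemma eigenspace_rank_le i : (i <= d)%N -> (\rank (eigenspace M (th i)) <= weight_count i)%N.
Proof.
move=> le_id; pose S := colsub (@enum_val _ [pred k | w k == i]) (1%:M : 'M[F]_n).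
have no_cap : (eigenspace M (th i) :&: kermx S)%MS = 0.
  apply/eqP/rowV0P => v; rewrite sub_capmx => /andP[/eigenspaceP ev /sub_kermxP vS].
  apply: contraTeq isT => vn0; have [k vk eq_th] := eigenvector_weight vn0 ev.
  have wk : k \in [pred k | w k == i] by rewrite inE (th_inj le_id (w_bound k) eq_th).
  move: vS; rewrite /S mulmx_colsub mulmx1 => /matrixP/(_ 0 (enum_rank_in wk k)).
  by rewrite !mxE enum_rankK_in // => /eqP; rewrite (negbTE vk).
have := mxrank_mul_ker (eigenspace M (th i)) S; rewrite no_cap mxrank0 addn0 => <-.
exact: rank_leq_col.
Qed.

Lemma sum_weight_count : (\sum_(i < d.+1) weight_count i = n)%N.
Proof.
transitivity #|'I_n|; last exact: card_ord.
rewrite -sum1_card (partition_big (fun k => inord (w k) : 'I_d.+1) predT) //=.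
apply: eq_bigr => i _; rewrite -sum1_card; apply: eq_bigl => k; rewrite inE.
by rewrite -val_eqE /= inordK ?ltnS.
Qed.

(* The upper bounds of [eigenspace_rank_le] add up to n, the lower bound of
   [sum_eigenspace_ge], so each of them is an equality. *)
Lemma eigenspace_rank i : (i <= d)%N -> \rank (eigenspace M (th i)) = weight_count i.
Proof.
rewrite -ltnS => lt_id.
have le_rk t : (\rank (eigenspace M (th (t : 'I_d.+1))) <= weight_count t)%N.
  by apply: eigenspace_rank_le; rewrite -ltnS.
have [_ eq_sums] := leqif_sum (fun t (_ : predT t) => leqif_eq (le_rk t)).
have /forallP/(_ (Ordinal lt_id))/eqP // :
    [forall t : 'I_d.+1, predT t ==> (\rank (eigenspace M (th t)) == weight_count t)].
by rewrite -eq_sums eqn_leq leq_sum //= sum_weight_count sum_eigenspace_ge.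
Qed.

(* With binom(d, i) coordinates of each weight i, the eigenspaces for the
   distinct th i form a direct sum of full dimension. *)
Theorem weight_triangular_spectrum :
  (forall i, (i <= d)%N -> weight_count i = 'C(d, i)) -> binomial_spectrum M th d.
Proof.
move=> count_bin; split; [|split].
- apply/diagonalizablePeigen; exists [seq th i | i <- iota 0 d.+1].
    by rewrite map_inj_in_uniq ?iota_uniq // => i j; rewrite !mem_iota !ltnS; apply: th_inj.
  rewrite big_map -[iota 0 d.+1]/(index_iota 0 d.+1) big_mkord.
  apply/eqmxP; rewrite submx1 sub1mx /row_full.
  have th_ord_inj : {in predT &, injective (fun i : 'I_d.+1 => th i)}.
    by move=> i j _ _ /th_inj eq_ij; apply/val_inj/eq_ij; rewrite -ltnS.
  move/mxdirectP: (@mxdirect_sum_eigenspace _ _ _ M _ _ th_ord_inj) => /= ->.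
  rewrite -[X in _ == X]sum_weight_count; apply/eqP/eq_bigr => i _.
  by rewrite eigenspace_rank // -ltnS.
- move=> z; split.
    by case/eigenvalueP => v /eigenvector_weight H /H [k _ ->]; exists (w k).
  case=> i le_id ->; rewrite /eigenvalue -mxrank_eq0 eigenspace_rank //.
  by rewrite count_bin // -lt0n bin_gt0.
- by move=> i le_id; rewrite eigenspace_rank // count_bin.
Qed.
End WeightTriangular.

(* The same for a matrix triangular in the opposite direction: reverse the
   weight, i |-> d - i, and use binom(d, d - i) = binom(d, i). *)
Lemma weight_lower_triangular_spectrum (F : fieldType) n d (M : 'M[F]_n) (w : 'I_n -> nat)
    (th : nat -> F) :
  (forall k, (w k <= d)%N) ->
  (forall i j, (i <= d)%N -> (j <= d)%N -> th i = th j -> i = j) ->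
  (forall k, M k k = th (w k)) ->
  (forall k l, k != l -> M k l != 0 -> (w l < w k)%N) ->
  (forall i, (i <= d)%N -> #|[pred k | w k == i]| = 'C(d, i)) ->
  binomial_spectrum M th d.
Proof.
move=> w_bound th_inj M_diag M_lower count_bin.
have [|||||diagM [eigM rankM]] :=
  @weight_triangular_spectrum F n d M (fun k => d - w k)%N (fun i => th (d - i)%N).
- by move=> k; rewrite leq_subr.
- move=> i j le_id le_jd /th_inj; rewrite !leq_subr => /(_ isT isT) eq_ij.
  by rewrite -(subKn le_id) -(subKn le_jd) eq_ij.
- by move=> k; rewrite subKn.
- by move=> k l nkl /(M_lower _ _ nkl) lt_lk; rewrite ltn_sub2l // (leq_trans lt_lk).
- move=> i le_id; rewrite -bin_sub // -count_bin ?leq_subr //; apply: eq_card => k.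
  by rewrite !inE; apply/eqP/eqP => [<-|->]; rewrite subKn.
split => //; split=> [z|i le_id].
- rewrite eigM; split=> -[i le_id ->]; exists (d - i)%N; rewrite ?leq_subr ?subKn //.
- by rewrite -{1}(subKn le_id) rankM ?leq_subr // bin_sub.
Qed.

Section Grading.
Variable F : fieldType.

Definition tidx_inv m n (p : 'I_m * 'I_n) : 'I_(m * n) :=
  cast_ord (mxvec_cast m n) (enum_rank p).

Lemma tidxK m n : cancel (@tidx m n) (@tidx_inv m n).
Proof. by move=> k; rewrite /tidx /tidx_inv enum_valK cast_ordKV. Qed.

Lemma tidx_invK m n : cancel (@tidx_inv m n) (@tidx m n).
Proof. by move=> p; rewrite /tidx /tidx_inv cast_ordK enum_rankK. Qed.

Lemma tidx_eq m n (k l : 'I_(m * n)) :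
  (k == l) = ((tidx k).1 == (tidx l).1) && ((tidx k).2 == (tidx l).2).
Proof.
by rewrite -xpair_eqE -!surjective_pairing (inj_eq (can_inj (@tidxK m n))).
Qed.

Lemma tensmx_tr m n (A : 'M[F]_m) (B : 'M[F]_n) : (tensmx A B)^T = tensmx A^T B^T.
Proof. by apply/matrixP => k l; rewrite !mxE. Qed.

Lemma tens_diag_mx m n (a : 'rV[F]_m) (b : 'rV[F]_n) :
  tensmx (diag_mx a) (diag_mx b) = diag_mx (\row_k (a 0 (tidx k).1 * b 0 (tidx k).2)).
Proof.
apply/matrixP => k l; rewrite !mxE tidx_eq.
by case: eqP => _; case: eqP => _; rewrite ?mulr0n ?mulr1n ?mulr0 ?mul0r.
Qed.

Lemma is_diag_mx_support n (A : 'M[F]_n) k l : is_diag_mx A -> A k l != 0 -> k = l.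
Proof. by move=> /is_diag_mxP A_diag; apply: contraNeq => /A_diag->. Qed.

Lemma tens_is_diag m n (A : 'M[F]_m) (B : 'M[F]_n) :
  is_diag_mx A -> is_diag_mx B -> is_diag_mx (tensmx A B).
Proof.
move=> A_diag B_diag; apply/is_diag_mxP => k l; apply: contraNeq.
rewrite mxE mulf_eq0 negb_or => /andP[/(is_diag_mx_support A_diag) eq1].
by move/(is_diag_mx_support B_diag) => eq2; rewrite (inj_eq val_inj) tidx_eq eq1 eq2 !eqxx.
Qed.

Definition raises n (E : 'M[F]_n) (w : 'I_n -> nat) :=
  forall k l, E k l != 0 -> w l = (w k).+1.

Definition lowers n (E : 'M[F]_n) (w : 'I_n -> nat) := raises E^T w.

Lemma lowersP n (E : 'M[F]_n) w k l : lowers E w -> E k l != 0 -> w k = (w l).+1.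
Proof. by move=> E_low Ekl; apply: E_low; rewrite mxE. Qed.

Definition tens_weight m n (wx : 'I_m -> nat) (wy : 'I_n -> nat) (k : 'I_(m * n)) :=
  (wx (tidx k).1 + wy (tidx k).2)%N.

Lemma tens_raises m n (A B : 'M[F]_m) (C D : 'M[F]_n) wx wy :
  raises A wx -> is_diag_mx B -> is_diag_mx C -> raises D wy ->
  raises (tensmx A C + tensmx B D) (tens_weight wx wy).
Proof.
move=> A_up B_diag C_diag D_up k l; rewrite /tens_weight !mxE.
have [->|] := eqVneq (A (tidx k).1 (tidx l).1 * C (tidx k).2 (tidx l).2) 0.
  rewrite add0r mulf_eq0 negb_or => /andP[/(is_diag_mx_support B_diag)-> /D_up->].
  by rewrite addnS.
by rewrite mulf_eq0 negb_or => /andP[/A_up-> /(is_diag_mx_support C_diag)->] _.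
Qed.

Lemma tens_lowers m n (A B : 'M[F]_m) (C D : 'M[F]_n) wx wy :
  lowers A wx -> is_diag_mx B -> is_diag_mx C -> lowers D wy ->
  lowers (tensmx A C + tensmx B D) (tens_weight wx wy).
Proof.
move=> A_low B_diag C_diag D_low.
by rewrite /lowers linearD /= !tensmx_tr; apply: tens_raises; rewrite ?is_diag_trmx.
Qed.

Variable q : F.
Hypothesis q_neq0 : q != 0.

Record weight_graded n (X : uqrep F n) (w : 'I_n -> nat) (d : nat) : Prop := WeightGraded {
  graded_K0 : K0 X = diag_mx (\row_k (q ^+ (2 * w k) / q ^+ d));
  graded_K1 : K1 X = diag_mx (\row_k (q ^+ d / q ^+ (2 * w k)));
  graded_K0i : is_diag_mx (K0i X);
  graded_K1i : is_diag_mx (K1i X);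
  graded_E0p : raises (E0p X) w;
  graded_E1m : raises (E1m X) w;
  graded_E1p : lowers (E1p X) w;
  graded_E0m : lowers (E0m X) w;
  graded_bound : forall k, (w k <= d)%N }.

Lemma tens_graded m n (X : uqrep F m) (Y : uqrep F n) wx wy dx dy :
  weight_graded X wx dx -> weight_graded Y wy dy ->
  weight_graded (tensrep X Y) (tens_weight wx wy) (dx + dy).
Proof.
case=> X0 X1 X0i X1i X0p X1m X1p X0m Xb; case=> Y0 Y1 Y0i Y1i Y0p Y1m Y1p Y0m Yb.
have Y0_diag : is_diag_mx (K0 Y) by rewrite Y0 diag_mx_is_diag.
have Y1_diag : is_diag_mx (K1 Y) by rewrite Y1 diag_mx_is_diag.
split=> /=.
- rewrite X0 Y0 tens_diag_mx; congr diag_mx; apply/rowP => k.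
  by rewrite !mxE /tens_weight mulf_div mulnDr !exprD.
- rewrite X1 Y1 tens_diag_mx; congr diag_mx; apply/rowP => k.
  by rewrite !mxE /tens_weight mulf_div mulnDr !exprD.
- exact: tens_is_diag.
- exact: tens_is_diag.
- by apply: tens_raises; rewrite ?scalar_mx_is_diag.
- by apply: tens_raises; rewrite ?scalar_mx_is_diag.
- by apply: tens_lowers; rewrite ?scalar_mx_is_diag.
- by apply: tens_lowers; rewrite ?scalar_mx_is_diag.
- by move=> k; apply: leq_add.
Qed.

Lemma trivrep_graded : weight_graded (trivrep F) (fun=> 0%N) 0.
Proof.
have one_diag : (1%:M : 'M[F]_1) = diag_mx (\row_k (q ^+ 0 / q ^+ 0)).
  by rewrite divr1 -diag_const_mx; congr diag_mx; apply/rowP => k; rewrite !mxE.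
have zero_raises : raises (0 : 'M[F]_1) (fun=> 0%N) by move=> k l; rewrite mxE eqxx.
by split; rewrite //= ?scalar_mx_is_diag ?mul0n //; rewrite /lowers trmx0.
Qed.

Lemma Vrep_graded alpha : weight_graded (Vrep q alpha) (@nat_of_ord 2) 1.
Proof.
split=> /=; last by case=> -[|[|]].
- apply/matrixP=> -[[|[|i]] Hi] [[|[|j]] Hj] //; rewrite !mxE /= ?mulr0n ?mulr1n ?muln0 ?muln1 //.
    by rewrite expr0 div1r.
  by rewrite expr2 mulfK.
- apply/matrixP=> -[[|[|i]] Hi] [[|[|j]] Hj] //; rewrite !mxE /= ?mulr0n ?mulr1n ?muln0 ?muln1 //.
    by rewrite expr0 divr1.
  by rewrite expr2 invfM mulrA divff // div1r.
- by apply/is_diag_mxP=> -[[|[|i]] Hi] [[|[|j]] Hj] //= _; rewrite mxE.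
- by apply/is_diag_mxP=> -[[|[|i]] Hi] [[|[|j]] Hj] //= _; rewrite mxE.
all: by move=> -[[|[|i]] Hi] [[|[|j]] Hj]; rewrite !mxE //= eqxx.
Qed.

Lemma castrep_graded m n (e : m = n) (e' : n = m) (X : uqrep F m) w d :
  weight_graded X w d -> weight_graded (castrep e X) (fun k => w (cast_ord e' k)) d.
Proof.
have cast_eq k : cast_ord (esym e) k = cast_ord e' k by apply: val_inj.
have cast_raises (E : 'M[F]_m) :
    raises E w -> raises (castmx (e, e) E) (fun k => w (cast_ord e' k)).
  by move=> E_up k l; rewrite castmxE /= !cast_eq => /E_up.
have cast_diag (E : 'M[F]_m) : is_diag_mx E -> is_diag_mx (castmx (e, e) E).
  by move=> /is_diag_mxP E_diag; apply/is_diag_mxP => k l nkl; rewrite castmxE E_diag.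
have cast_diag_mx (r : 'rV[F]_m) :
    castmx (e, e) (diag_mx r) = diag_mx (\row_k r 0 (cast_ord e' k)).
  by apply/matrixP => k l; rewrite castmxE !mxE !cast_eq (inj_eq (@cast_ord_inj _ _ _)).
case=> X0 X1 X0i X1i X0p X1m X1p X0m Xb; split=> //=.
- by rewrite X0 cast_diag_mx; congr diag_mx; apply/rowP => k; rewrite !mxE.
- by rewrite X1 cast_diag_mx; congr diag_mx; apply/rowP => k; rewrite !mxE.
- exact: cast_diag.
- exact: cast_diag.
- exact: cast_raises.
- exact: cast_raises.
- by rewrite /lowers trmx_cast; apply: cast_raises.
- by rewrite /lowers trmx_cast; apply: cast_raises.
Qed.

Lemma count_cast m n (e : n = m) (w : 'I_m -> nat) i :
  #|[pred k : 'I_n | w (cast_ord e k) == i]| = #|[pred k : 'I_m | w k == i]|.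
Proof.
rewrite -!sum1_card (reindex (cast_ord e)) /=; last first.
  by exists (cast_ord (esym e)) => k _; [exact: cast_ordK | exact: cast_ordKV].
by apply: eq_bigl => k; rewrite !inE.
Qed.

(* Tensoring with a two-dimensional module of weights 0, 1: a vector of
   weight i comes from a weight-i or a weight-(i-1) vector (Pascal's rule). *)
Lemma count_tens_weight_bit n (w : 'I_n -> nat) i :
  #|[pred k | tens_weight (@nat_of_ord 2) w k == i]| =
  (#|[pred k | w k == i]| + (if i is i'.+1 then #|[pred k | w k == i'] | else 0))%N.
Proof.
rewrite -sum1_card (reindex (@tidx_inv 2 n)) /=; last first.
  by exists (@tidx 2 n) => p _; [exact: tidx_invK | exact: tidxK].
rewrite (eq_bigl (fun p : 'I_2 * 'I_n => (p.1 + w p.2)%N == i)); last first.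
  by move=> p; rewrite !inE /tens_weight tidx_invK.
rewrite -(pair_big_dep predT (fun (a : 'I_2) k => (a + w k)%N == i) (fun _ _ => 1%N)) /=.
rewrite !big_ord_recl big_ord0 addn0 -!sum1_card /=; congr (_ + _)%N.
case: i => [|i]; first by rewrite big_pred0.
by rewrite -sum1_card; apply: eq_bigl => k; rewrite inE.
Qed.

End Grading.

(* The weight of a basis vector of V(alpha_1) (x) ... (x) V(alpha_d): its
   number of y factors. *)
Fixpoint Vweight (d : nat) : 'I_(2 ^ d) -> nat :=
  if d is d'.+1 then fun k => tens_weight (@nat_of_ord 2) (@Vweight d') (cast_ord (expnS 2 d') k)
  else fun=> 0%N.
Arguments Vweight : clear implicits.

Lemma count_Vweight d i : #|[pred k | Vweight d k == i]| = 'C(d, i).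
Proof.
elim: d i => [|d IH] [|i] /=.
- by rewrite (eq_card (B := predT)) ?card_ord.
- by rewrite (eq_card (B := pred0)) ?card0.
- by rewrite count_cast count_tens_weight_bit IH !bin0 addn0.
- by rewrite count_cast count_tens_weight_bit !IH binS addnC.
Qed.

Section Operators.
Variables (F : fieldType) (q : F).
Hypothesis q_neq0 : q != 0.

Lemma Vtens_graded (s : seq F) : weight_graded q (Vtens q s) (Vweight (size s)) (size s).
Proof.
elim: s => [|alpha s IH] /=; first exact: trivrep_graded.
exact: castrep_graded (tens_graded (Vrep_graded q_neq0 alpha) IH).
Qed.

Lemma raises_diag0 n (E : 'M[F]_n) w k : raises E w -> E k k = 0.
Proof. by move=> E_up; apply: contraTeq isT => /E_up /n_Sn. Qed.

Lemma lowers_diag0 n (E : 'M[F]_n) w k : lowers E w -> E k k = 0.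
Proof. by move=> /(raises_diag0 k); rewrite mxE. Qed.

Lemma thetaseqE a b c d i :
  thetaseq q a b c d i = a + b * (q ^+ (2 * i) / q ^+ d) + c * (q ^+ d / q ^+ (2 * i)).
Proof. by rewrite /thetaseq !expfzDr // -!invr_expz. Qed.

(* A is weight-triangular on V: its diagonal entries are the theta_i and
   its other entries come from e_0^+ and e_1^- K_1, which raise the weight. *)
Lemma Aop_entries a b c u v (s : seq F) :
  (forall k, Aop q a b c u v s k k = thetaseq q a b c (size s) (Vweight (size s) k)) /\
  (forall k l, k != l -> Aop q a b c u v s k l != 0 ->
     (Vweight (size s) k < Vweight (size s) l)%N).
Proof.
case: (Vtens_graded s) => K0E K1E _ _ E0p_up E1m_up _ _ _.
rewrite /Aop K0E K1E mul_diag_mx; split=> [k|k l nkl].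
  by rewrite !mxE eqxx (raises_diag0 k E0p_up) (raises_diag0 k E1m_up) thetaseqE !mulr0 !addr0.
rewrite !mxE (negbTE nkl) mulr0n !mulr0 !add0r.
have [/eqP E0p_kl|/E0p_up->] := boolP (E0p (Vtens q s) k l == 0); last by [].
by rewrite E0p_kl mulr0 add0r !mulf_eq0 !negb_or => /and3P[_ _ /E1m_up->].
Qed.

(* Dually, A^* is weight-triangular in the other direction: e_1^+ and
   e_0^- K_0 lower the weight. *)
Lemma Asop_entries a b c u v (s : seq F) :
  (forall k, Asop q a b c u v s k k = thetaseq q a b c (size s) (Vweight (size s) k)) /\
  (forall k l, k != l -> Asop q a b c u v s k l != 0 ->
     (Vweight (size s) l < Vweight (size s) k)%N).
Proof.
case: (Vtens_graded s) => K0E K1E _ _ _ _ E1p_low E0m_low _.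
rewrite /Asop K0E K1E mul_diag_mx; split=> [k|k l nkl].
  by rewrite !mxE eqxx (lowers_diag0 k E1p_low) (lowers_diag0 k E0m_low) thetaseqE !mulr0 !addr0.
rewrite !mxE (negbTE nkl) mulr0n !mulr0 !add0r.
have [/eqP E1p_kl|/(lowersP E1p_low)->] := boolP (E1p (Vtens q s) k l == 0); last by [].
by rewrite E1p_kl mulr0 add0r !mulf_eq0 !negb_or => /and3P[_ _ /(lowersP E0m_low)->].
Qed.

End Operators.

Theorem lemma9p4 (F : closedFieldType) (d : nat)
  (q a b c as_ bs cs u v us vs : F) (alpha : seq F)
  (Halpha : size alpha = d) (Halpha0 : forall x, x \in alpha -> x != 0)
  (Hq : q != 0) (Hb : b != 0) (Hc : c != 0) (Hbs : bs != 0) (Hcs : cs != 0)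
  (Hq2 : q ^+ 2 != 1) (Hq2' : q ^+ 2 != -1)
  (Hth : forall i j, (i <= d)%N -> (j <= d)%N ->
           thetaseq q a b c d i = thetaseq q a b c d j -> i = j)
  (Hths : forall i j, (i <= d)%N -> (j <= d)%N ->
           thetaseq q as_ bs cs d i = thetaseq q as_ bs cs d j -> i = j)
  (Huv : u * vs = - (b * bs * q^-1 * (q - q^-1) ^+ 2))
  (Hvu : v * us = - (c * cs * q^-1 * (q - q^-1) ^+ 2)) :
  let A := Aop q a b c u v alpha in
  let As := Asop q as_ bs cs us vs alpha in
  (diagonalizable A
   /\ (forall z, eigenvalue A z <-> exists2 i, (i <= d)%N & z = thetaseq q a b c d i)
   /\ (forall i, (i <= d)%N -> \rank (eigenspace A (thetaseq q a b c d i)) = 'C(d, i)))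
  /\
  (diagonalizable As
   /\ (forall z, eigenvalue As z <-> exists2 i, (i <= d)%N & z = thetaseq q as_ bs cs d i)
   /\ (forall i, (i <= d)%N -> \rank (eigenspace As (thetaseq q as_ bs cs d i)) = 'C(d, i))).
Proof.
move=> A As; subst d.
have w_bound := graded_bound (Vtens_graded Hq alpha).
have counts i (_ : (i <= size alpha)%N) := count_Vweight (size alpha) i.
have [A_diag A_upper] := Aop_entries Hq a b c u v alpha.
have [As_diag As_lower] := Asop_entries Hq as_ bs cs us vs alpha.
split.
- exact: weight_triangular_spectrum w_bound Hth A_diag A_upper counts.
- exact: weight_lower_triangular_spectrum w_bound Hths As_diag As_lower counts.
Qed.
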